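(* Let $a$ and $b$ be positive integers. There exists a graph $G$ with $\gamma^{LD}(G)=a$ and $\gamma^{SLD}(G)=b$ if and only if $0\le b-a\le 2^a-1$.
   Context: Graphs are finite, simple and undirected, and need not be connected. For a vertex $u$, $N(u)$ is its set of neighbours and $N[u]=N(u)\cup\{u\}$. A code is a non-empty subset $C$ of the vertex set $V$; $I(C;u)=N[u]\cap C$. A code $C$ is locating-dominating if for all distinct $u,v\in V\setminus C$ we have $I(C;u)\neq\emptyset$ and $I(C;u)\ne I(C;v)$. A code $C$ is self-locating-dominating if for every $u\in V\setminus C$ we have $I(C;u)\neq\emptyset$ and $\bigcap_{c\in I(C;u)}N[c]=\{u\}$. $\gamma^{LD}(G)$ and $\gamma^{SLD}(G)$ are the minimum sizes of a locating-dominating and a self-locating-dominating code in $G$. *)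

From mathcomp Require Import all_boot.
Set Implicit Arguments. Unset Strict Implicit. Unset Printing Implicit Defensive.

Definition simple_graph (T : finType) (e : rel T) : Prop :=
  symmetric e /\ irreflexive e.

Definition cnbh (T : finType) (e : rel T) (u : T) : {set T} :=
  [set v | (v == u) || e u v].

Definition Iset (T : finType) (e : rel T) (C : {set T}) (u : T) : {set T} :=
  cnbh e u :&: C.

Definition is_LD (T : finType) (e : rel T) (C : {set T}) : bool :=
  (C != set0) &&
  [forall u, (u \notin C) ==> (Iset e C u != set0)] &&
  [forall u, forall v, [&& u \notin C, v \notin C & u != v] ==> (Iset e C u != Iset e C v)].

Definition is_SLD (T : finType) (e : rel T) (C : {set T}) : bool :=
  (C != set0) &&
  [forall u, (u \notin C) ==>
     (Iset e C u != set0) && (\bigcap_(c in Iset e C u) cnbh e c == [set u])].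

(* minimum sizes; the default #|T| is irrelevant whenever T is nonempty,
   since then T itself is such a code *)
Definition gamma_LD (T : finType) (e : rel T) : nat :=
  \big[minn/#|T|]_(C : {set T} | is_LD e C) #|C|.

Definition gamma_SLD (T : finType) (e : rel T) : nat :=
  \big[minn/#|T|]_(C : {set T} | is_SLD e C) #|C|.

From mathcomp Require Import all_boot zify.
Set Implicit Arguments. Unset Strict Implicit. Unset Printing Implicit Defensive.

(* Every self-locating-dominating code is locating-dominating, and a
   locating-dominating code C assigns distinct nonempty subsets I(C;u) of C to
   the vertices outside C; hence a <= b <= |V| <= a + 2^a - 1.

   Conversely, b = a is realised by the edgeless graph on a vertices.  For
   m = b - a > 0 pick k with 2^(k-1) <= m < 2^k, and take a clique K on k
   vertices, a - k isolated vertices, and m vertices labelled by distinct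
   nonempty subsets of K, each joined to the members of its label.  The labels
   include the twin t_i of every i in K (t_0 = K, t_i = K - {i} otherwise),
   and t_i is also joined to every labelled vertex containing i.  K plus the
   isolated vertices is a locating-dominating code, and none is smaller: a
   code with only t < k of the k + m non-isolated vertices would have to
   locate the other k + m - t > 2^(k-1) > 2^t - 1 of them.  On the other hand
   every vertex u has some v <> u with N(u) included in N[v] (t_i for the
   clique vertex i), which forces u into every self-locating-dominating code,
   so gamma^SLD = |V| = k + m + (a - k) = b. *)

Section MinCode.
Variables (T : finType) (P : pred {set T}).

Local Notation min_code := (\big[minn/#|T|]_(C : {set T} | P C) #|C|).

Lemma min_code_le C : P C -> min_code <= #|C|.
Proof.
move=> PC; have : C \in index_enum {set T} := mem_index_enum C.
elim: (index_enum _) => // D r IH; rewrite inE big_cons => /predU1P[<- | /IH].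
  by rewrite PC geq_minl.
by case: (P D) => // le; rewrite geq_min le orbT.
Qed.

Lemma min_code_le_card : min_code <= #|T|.
Proof.
apply: (big_ind (fun x => x <= #|T|)) => // [x y hx _ | C _].
  by rewrite geq_min hx.
exact: max_card.
Qed.

Lemma min_code_geq n :
  (forall C, P C -> n <= #|C|) -> n <= #|T| -> n <= min_code.
Proof.
by move=> hn hT; apply: (big_ind (fun x => n <= x)) => // x y; rewrite leq_min => ->.
Qed.

Lemma min_code_attained : P setT -> exists2 C, P C & min_code = #|C|.
Proof.
move=> PT; apply: (big_ind (fun x => exists2 C, P C & x = #|C|)).
- by exists setT; rewrite ?cardsT.
- by move=> x y [C PC ->] [D PD ->]; case: leqP => _; [exists C | exists D].
- by move=> C PC; exists C.
Qed.

End MinCode.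

Section Codes.
Variables (T : finType) (e : rel T).

Lemma setT_SLD (x : T) : is_SLD e setT.
Proof.
apply/andP; split; first by apply/set0Pn; exists x; rewrite inE.
by apply/forallP => u; rewrite inE.
Qed.

Lemma SLD_LD C : is_SLD e C -> is_LD e C.
Proof.
case/andP=> C0 /forallP hC; rewrite /is_LD C0 /=; apply/andP; split.
  by apply/forallP => u; apply/implyP => /(implyP (hC u))/andP[].
apply/forallP => u; apply/forallP => v; apply/implyP => /and3P[uC vC uv].
have /andP[_ /eqP Iu] := implyP (hC u) uC.
have /andP[_ /eqP Iv] := implyP (hC v) vC.
by apply: contra_neq uv => Iuv; apply/set1_inj; rewrite -Iu -Iv Iuv.
Qed.

Lemma setT_LD (x : T) : is_LD e setT.
Proof. exact/SLD_LD/setT_SLD. Qed.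

Lemma gamma_LD_le C : is_LD e C -> gamma_LD e <= #|C|.
Proof. exact: min_code_le. Qed.

Lemma gamma_LD_le_SLD : gamma_LD e <= gamma_SLD e.
Proof.
apply: min_code_geq; last exact: min_code_le_card.
by move=> C /SLD_LD; apply: gamma_LD_le.
Qed.

Lemma isolated_in_LD C u : is_LD e C -> (forall w, ~~ e u w) -> u \in C.
Proof.
case/andP=> /andP[_ /forallP hC] _ iso_u; apply: contraT => uC.
have /set0Pn[c] := implyP (hC u) uC.
rewrite !inE => /andP[/orP[/eqP -> | uc] cC]; first by rewrite cC in uC.
by rewrite (negbTE (iso_u c)) in uc.
Qed.

(* The locating sets of the non-code vertices are distinct nonempty subsets of
   C :&: A. *)
Lemma LD_card_compl C (A : {set T}) : is_LD e C ->
  (forall u, u \notin C -> Iset e C u \subset A) -> #|~: C| < 2 ^ #|C :&: A|.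
Proof.
case/andP=> /andP[_ /forallP hC1] /forallP hC2 IA.
have I_inj : {in ~: C &, injective (Iset e C)}.
  move=> u v; rewrite !inE => uC vC; apply: contra_eq => uv.
  by apply: (implyP (forallP (hC2 u) v)); rewrite uC vC uv.
rewrite -(card_in_imset I_inj).
have sub : [set Iset e C u | u in ~: C] \subset powerset (C :&: A) :\ set0.
  apply/subsetP => S /imsetP[u]; rewrite inE => uC ->.
  rewrite !inE (implyP (hC1 u) uC) subsetI IA // andbT; exact: subsetIr.
apply: leq_ltn_trans (subset_leq_card sub) _.
have := cardsD1 set0 (powerset (C :&: A)).
by rewrite card_powerset !inE sub0set add1n => ->.
Qed.

Lemma card_lt_gamma_LD : #|T| < gamma_LD e + 2 ^ gamma_LD e.
Proof.
have [T0 | [x _]] := set_0Vmem [set: T].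
  by rewrite -cardsT T0 cards0 addn_gt0 expn_gt0 orbT.
rewrite /gamma_LD; have [C hC ->] := min_code_attained (setT_LD x).
have := LD_card_compl (A := setT) hC (fun _ _ => subsetT _).
rewrite setIT -(cardsC C); lia.
Qed.

(* A non-code vertex u with N(u) inside N[v], v <> u, would have v in the
   intersection of the closed neighbourhoods of I(C;u). *)
Lemma dominated_in_SLD C u v : symmetric e -> is_SLD e C -> v != u ->
  (forall w, e u w -> w \in cnbh e v) -> u \in C.
Proof.
move=> e_sym /andP[_ /forallP hC] vu Nuv; apply: contraT => uC.
have /andP[_ /eqP Iu] := implyP (hC u) uC.
suff : v \in \bigcap_(c in Iset e C u) cnbh e c by rewrite Iu inE (negbTE vu).
apply/bigcapP => c; rewrite !inE => /andP[/orP[/eqP -> | uc] cC].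
  by rewrite cC in uC.
by move: (Nuv c uc); rewrite !inE => /orP[/eqP -> | vc]; rewrite ?eqxx // e_sym vc orbT.
Qed.

Lemma gamma_SLD_lt : gamma_SLD e < gamma_LD e + 2 ^ gamma_LD e.
Proof. exact: leq_ltn_trans (min_code_le_card _) card_lt_gamma_LD. Qed.

End Codes.

Section Construction.
Variables (k' r : nat) (fam : {set {set 'I_k'.+1}}).
Local Notation k := k'.+1.

Definition twin_set (i : 'I_k) : {set 'I_k} := if i == ord0 then setT else [set~ i].

Lemma mem_twin_set i j : (j \in twin_set i) = (i == ord0) || (j != i).
Proof. by rewrite /twin_set; case: eqP; rewrite !inE. Qed.

Lemma twin_set_inj : injective twin_set.
Proof.
move=> i j eq_ij; apply/eqP; apply: contraT => ij.
have : i \in twin_set i by rewrite eq_ij mem_twin_set ij orbT.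
have : j \in twin_set j by rewrite -eq_ij mem_twin_set (eq_sym j) ij orbT.
rewrite !mem_twin_set !eqxx !orbF => /eqP j0 /eqP i0.
by rewrite i0 j0 eqxx in ij.
Qed.

Definition label := {S : {set 'I_k} | S \in fam}.

(* inl (inl i): the clique vertices; inl (inr S): one vertex per set S of fam,
   adjacent to the clique vertices in S and, when S = twin_set i, to the set
   vertices containing i; inr j: r isolated vertices. *)
Definition vertex := (('I_k + label) + 'I_r)%type.

Definition arc (u v : vertex) : bool :=
  match u, v with
  | inl (inl _), inl (inl _) => true
  | inl (inl i), inl (inr y) => i \in val y
  | inl (inr x), inl (inr y) => [exists i, (val x == twin_set i) && (i \in val y)]
  | _, _ => false
  end.

Definition adj : rel vertex := fun u v => (u != v) && (arc u v || arc v u).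

Lemma adj_simple : simple_graph adj.
Proof.
split; first by move=> u v; rewrite /adj eq_sym orbC.
by move=> u; rewrite /adj eqxx.
Qed.

Lemma card_vertex : #|{: vertex}| = k + #|fam| + r.
Proof. by rewrite !card_sum !card_ord card_sig; congr (_ + _ + _); apply: eq_card. Qed.

Hypothesis twin_set_in_fam : forall i, twin_set i \in fam.
Hypothesis set0_notin_fam : set0 \notin fam.

Definition twin_label (i : 'I_k) : label := exist _ (twin_set i) (twin_set_in_fam i).

Lemma clique_dominated i w :
  adj (inl (inl i)) w -> w \in cnbh adj (inl (inr (twin_label i))).
Proof.
rewrite !inE; case: w => [[j | y] | j] //.
- rewrite /adj /= andbT => ij; rewrite mem_twin_set.
  by apply/orP; right; rewrite eq_sym; apply: contra_neq ij => ->.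
- rewrite /adj /= orbF => iy; case: eqP => //= /eqP ny.
  rewrite eq_sym ny; apply/orP; left.
  by apply/existsP; exists i; rewrite eqxx.
Qed.

Lemma label_dominated x : exists2 v, v != inl (inr x) &
  forall w, adj (inl (inr x)) w -> w \in cnbh adj v.
Proof.
(* If x = twin_set i, the clique vertex i dominates x; otherwise clique
   vertex 0 does, since 0 lies in every twin set. *)
pose i0 := if [pick i | sval x == twin_set i] is Some i then i else ord0.
exists (inl (inl i0)) => // w; rewrite !inE.
case: w => [[j | y] | j] //; first by rewrite /adj /= andbT eq_sym orbN.
rewrite /adj /= orbF => /andP[xy /orP[] /existsP[l /andP[/eqP xl ly]]].
  rewrite /i0; case: pickP => [i /eqP xi | /(_ l)]; last by rewrite xl eqxx.
  by move: xi; rewrite xl => /twin_set_inj <-.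
rewrite xl mem_twin_set /i0; case: pickP => [i /eqP xi | _]; last by rewrite eq_sym orbN.
apply/orP; right; apply: contra_neq xy => il; congr (inl (inr _)); apply: val_inj.
by rewrite /= xl xi il.
Qed.

Lemma isolated_vertex j w : ~~ adj (inr j) w.
Proof. by case: w => [[? | ?] | ?]; rewrite /adj /= ?andbF. Qed.

Lemma SLD_construction C : is_SLD adj C -> C = setT.
Proof.
move=> hC; apply/setP => u; rewrite inE.
have adj_sym : symmetric adj by case: adj_simple.
case: u => [[i | x] | j].
- exact: dominated_in_SLD adj_sym hC _ (clique_dominated (i := i)).
- by have [v vx] := label_dominated x; apply: dominated_in_SLD adj_sym hC vx.
- exact: isolated_in_LD (SLD_LD hC) (isolated_vertex j).
Qed.

Lemma gamma_SLD_construction : gamma_SLD adj = k + #|fam| + r.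
Proof.
rewrite -card_vertex; apply/eqP; rewrite eqn_leq; apply/andP; split.
  exact: min_code_le_card.
by apply: min_code_geq => // C /SLD_construction ->; rewrite cardsT.
Qed.

Definition base_code : {set vertex} := [set u | if u is inl (inr _) then false else true].

Lemma card_base_code : #|base_code| = k + r.
Proof.
have label_inj : injective (fun x : label => inl (inr x) : vertex) by move=> ? ? [].
have -> : base_code = ~: [set inl (inr x) | x : label].
  apply/setP => u; rewrite !inE; case: u => [[i | x] | j] /=.
  - by apply/esym/imsetP => -[].
  - by apply/esym/negbF/imsetP; exists x.
  - by apply/esym/imsetP => -[].
rewrite cardsCs setCK card_imset // card_vertex card_sig.
have -> : #|[pred S in fam]| = #|fam| by apply: eq_card.
lia.
Qed.

Lemma base_code_LD : is_LD adj base_code.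
Proof.
have I_label x i : (inl (inl i) \in Iset adj base_code (inl (inr x))) = (i \in val x).
  by rewrite !inE /adj /= andbT.
apply/andP; split; [apply/andP; split|].
- by apply/set0Pn; exists (inl (inl ord0)); rewrite inE.
- apply/forallP; case=> [[i | x] | j]; rewrite inE //=.
  have /set0Pn[i xi] : val x != set0 by apply: contraNneq set0_notin_fam => <-; exact: valP.
  by apply/set0Pn; exists (inl (inl i)); rewrite I_label.
- apply/forallP; case=> [[i | x] | j]; apply/forallP; case=> [[i' | y] | j']; rewrite !inE //=.
  apply/implyP; apply: contra_neq => Ixy; congr (inl (inr _)); apply/val_inj/setP => i.
  by rewrite -!I_label Ixy.
Qed.

Definition active : {set vertex} := [set u | if u is inl _ then true else false].

Lemma adj_active u w : adj u w -> (u \in active) && (w \in active).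
Proof. by case: u => [[? | ?] | ?]; case: w => [[? | ?] | ?]; rewrite /adj /= ?inE ?andbF. Qed.

Lemma card_compl_active : #|~: active| = r.
Proof.
have -> : ~: active = [set inr j | j : 'I_r].
  apply/setP => u; rewrite !inE; case: u => [[i | x] | j] /=.
  - by apply/esym/imsetP => -[].
  - by apply/esym/imsetP => -[].
  - by apply/esym/imsetP; exists j.
by rewrite card_imset ?card_ord // => ? ? [].
Qed.

Lemma LD_construction_card C : 2 ^ k' <= #|fam| -> is_LD adj C -> k + r <= #|C|.
Proof.
move=> fam_large hC.
have isolated_in_C : ~: active \subset C.
  apply/subsetP => -[[i | x] | j]; rewrite !inE // => _.
  exact: isolated_in_LD hC (isolated_vertex j).
have I_active u : u \notin C -> Iset adj C u \subset active.
  move=> uC; have u_active : u \in active.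
    by apply: contraR uC => u_iso; apply: (subsetP isolated_in_C); rewrite inE.
  apply/subsetP => w /setIP[+ _]; rewrite inE => /orP[/eqP -> // | /adj_active/andP[_ //]].
have card_C : #|C :&: active| + r = #|C|.
  by rewrite -(cardsID active C) setDE (setIidPr isolated_in_C) card_compl_active.
have card_compl_C : #|C| + #|~: C| = k + #|fam| + r by rewrite cardsC card_vertex.
have := LD_card_compl hC I_active.
have [k_le | lt_k] := leqP k #|C :&: active|; first lia.
have : 2 ^ #|C :&: active| <= 2 ^ k' by rewrite leq_pexp2l.
lia.
Qed.

Lemma gamma_LD_construction : 2 ^ k' <= #|fam| -> gamma_LD adj = k + r.
Proof.
move=> fam_large; apply/eqP; rewrite eqn_leq; apply/andP; split.
  by rewrite -card_base_code; apply: gamma_LD_le base_code_LD.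
apply: min_code_geq => [C | ]; first exact: LD_construction_card.
by rewrite card_vertex; lia.
Qed.

End Construction.

Lemma set_between_card (T : finType) (P Q : {set T}) n :
  P \subset Q -> #|P| <= n -> n <= #|Q| ->
  exists R : {set T}, [/\ P \subset R, R \subset Q & #|R| = n].
Proof.
move=> + + nQ; move: {2}(n - #|P|) (erefl (n - #|P|)) => d.
elim: d P => [|d IH] P dP PQ Pn.
  by exists P; split => //; apply/eqP; rewrite eqn_leq Pn -subn_eq0 dP.
have /subsetPn[x xQ xP] : ~~ (Q \subset P).
  by apply: contraTN nQ => /subset_leq_card QP; rewrite -ltnNge; lia.
have [R [xPR RQ cardR]] : exists R : {set T}, [/\ x |: P \subset R, R \subset Q & #|R| = n].
  by apply: IH; rewrite ?subUset ?sub1set ?xQ // cardsU1 xP; lia.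
by exists R; split => //; apply: subset_trans xPR; apply: subsetUr.
Qed.

Lemma twin_family k' m : k'.+1 <= m -> m < 2 ^ k'.+1 ->
  exists fam : {set {set 'I_k'.+1}},
    [/\ forall i, twin_set i \in fam, set0 \notin fam & #|fam| = m].
Proof.
move=> k_le_m m_lt.
pose twins := [set twin_set i | i : 'I_k'.+1].
pose nonempty := powerset [set: 'I_k'.+1] :\ set0.
have twins_nonempty : twins \subset nonempty.
  apply/subsetP => _ /imsetP[i _ ->]; rewrite !inE subsetT andbT.
  by apply/set0Pn; exists ord0; rewrite mem_twin_set eq_sym orbN.
have card_twins : #|twins| <= m.
  by apply: leq_trans (leq_imset_card _ _) _; rewrite card_ord.
have card_nonempty : #|nonempty| = (2 ^ k'.+1).-1.
  have := cardsD1 set0 (powerset [set: 'I_k'.+1]).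
  by rewrite card_powerset cardsT card_ord !inE sub0set add1n => ->.
have m_le : m <= #|nonempty| by rewrite card_nonempty; lia.
have [fam [twins_fam fam_nonempty card_fam]] := set_between_card twins_nonempty card_twins m_le.
exists fam; split => //.
  by move=> i; apply: (subsetP twins_fam); apply: imset_f.
by apply/negP => /(subsetP fam_nonempty); rewrite !inE eqxx.
Qed.

Lemma LD_edgeless (T : finType) (C : {set T}) : is_LD (fun _ _ => false) C -> C = setT.
Proof. by move=> hC; apply/setP => u; rewrite inE; apply: isolated_in_LD hC _. Qed.

Lemma gamma_LD_edgeless (T : finType) : gamma_LD (fun _ _ : T => false) = #|T|.
Proof.
apply/eqP; rewrite eqn_leq; apply/andP; split; first exact: min_code_le_card.
by apply: min_code_geq => // C /LD_edgeless ->; rewrite cardsT.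
Qed.

Lemma gamma_SLD_edgeless (T : finType) : gamma_SLD (fun _ _ : T => false) = #|T|.
Proof.
apply/eqP; rewrite eqn_leq; apply/andP; split; first exact: min_code_le_card.
by apply: min_code_geq => // C /SLD_LD/LD_edgeless ->; rewrite cardsT.
Qed.

Lemma exists_graph_gammas k' r m : 2 ^ k' <= m -> m < 2 ^ k'.+1 ->
  exists (T : finType) (e : rel T),
    [/\ simple_graph e, gamma_LD e = k'.+1 + r & gamma_SLD e = k'.+1 + m + r].
Proof.
move=> m_large m_lt.
have k_le_m : k'.+1 <= m by apply: leq_trans m_large; apply: ltn_expl.
have [fam [twins_fam set0_fam card_fam]] := twin_family k_le_m m_lt.
exists (vertex r fam), (@adj _ r fam); split.
- exact: adj_simple.
- by apply: gamma_LD_construction set0_fam _; rewrite card_fam.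
- by rewrite gamma_SLD_construction // card_fam.
Qed.

Theorem mainTheorem19 (a b : nat) (ha : 0 < a) (hb : 0 < b) :
  (exists (T : finType) (e : rel T),
      simple_graph e /\ gamma_LD e = a /\ gamma_SLD e = b)
  <-> (a <= b /\ b - a <= 2 ^ a - 1).
Proof.
split => [[T [e [_ [<- <-]]]] | [le_ab le_ba]].
  by have := gamma_SLD_lt e; have := gamma_LD_le_SLD e; lia.
move: le_ab; rewrite leq_eqVlt => /orP[/eqP <- | lt_ab].
  exists ('I_a : finType), (fun _ _ => false); split; first by [].
  by rewrite gamma_LD_edgeless gamma_SLD_edgeless card_ord.
set m := b - a; set k' := trunc_log 2 m.
have m_large : 2 ^ k' <= m by apply: trunc_logP; lia.
have m_lt : m < 2 ^ k'.+1 by apply: trunc_log_ltn.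
have k_lt_a : k' < a by rewrite -(ltn_exp2l _ _ (ltnSn 1)); lia.
have [T [e [simple_e LD_e SLD_e]]] := exists_graph_gammas (a - k'.+1) m_large m_lt.
by exists T, e; rewrite LD_e SLD_e; split => //; split; lia.
Qed.
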